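(* Consider the ODE system $$\frac{du}{dt}=a_1u-b_1u^2-c_1uv,\qquad \frac{dv}{dt}=\frac{a_2v}{1+ku}-b_2v^2-c_2uv,$$ with positive parameters $a_1,a_2,b_1,b_2,c_1,c_2$. For every value of $k\ge0$, the system has no periodic orbits in the nonnegative quadrant $\{u\ge0,v\ge0\}$.
   Context: The state space is the biologically feasible nonnegative quadrant of population densities. *)

From Stdlib Require Import Reals.
Open Scope R_scope.

Definition field_u (a1 b1 c1 : R) (u v : R) : R :=
  a1 * u - b1 * u ^ 2 - c1 * u * v.
Definition field_v (a2 b2 c2 k : R) (u v : R) : R :=
  a2 * v / (1 + k * u) - b2 * v ^ 2 - c2 * u * v.

Definition is_solution (a1 a2 b1 b2 c1 c2 k : R) (u v : R -> R) : Prop :=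
  forall t : R,
    derivable_pt_lim u t (field_u a1 b1 c1 (u t) (v t)) /\
    derivable_pt_lim v t (field_v a2 b2 c2 k (u t) (v t)).

Definition periodic_orbit_in_quadrant (a1 a2 b1 b2 c1 c2 k : R)
    (u v : R -> R) : Prop :=
  is_solution a1 a2 b1 b2 c1 c2 k u v /\
  (exists T : R, 0 < T /\ forall t : R, u (t + T) = u t /\ v (t + T) = v t) /\
  (exists t1 t2 : R, (u t1, v t1) <> (u t2, v t2)) /\
  (forall t : R, 0 <= u t /\ 0 <= v t).

(* Along a solution write u' = u P and v' = v Q, with per-capita rates
   P = a1 - b1 u - c1 v and Q = a2/(1+ku) - b2 v - c2 u.  Differentiating the
   product W = P Q gives
     W' = -(b1 u + b2 v) W - c1 v Q^2 - (a2 k/(1+ku)^2 + c2) u P^2,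
   so W decreases wherever it is nonnegative.  On a periodic solution, either
   W never vanishes, in which case P and Q have constant signs, u and v are
   monotone, hence constant, hence zero; or W vanishes at some t0, in which case
   W <= 0 everywhere, t0 is a maximum of W, W'(t0) = 0 forces u' = v' = 0 at t0,
   and a Gronwall estimate on the squared speed u'^2 + v'^2 shows that the
   solution is constant. *)

From Stdlib Require Import Reals Lra Lia ZArith Classical.
Open Scope R_scope.

Lemma derivable_pt_lim_eq f x l l' :
  derivable_pt_lim f x l -> l = l' -> derivable_pt_lim f x l'.
Proof. now intros H <-. Qed.

Lemma derivable_pt_lim_pow2 f x l :
  derivable_pt_lim f x l -> derivable_pt_lim (fun t => f t ^ 2) x (2 * f x * l).
Proof.
  intros H. eapply derivable_pt_lim_eq.
  - exact (derivable_pt_lim_comp f (fun y => y ^ 2) x l _ H (derivable_pt_lim_pow (f x) 2)).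
  - simpl. ring.
Qed.

Ltac derive :=
  eapply derivable_pt_lim_eq;
  [ repeat first
      [ match goal with H : forall t, derivable_pt_lim _ t _ |- _ => apply H end
      | apply derivable_pt_lim_const | apply derivable_pt_lim_id
      | apply derivable_pt_lim_pow2 | apply derivable_pt_lim_minus
      | apply derivable_pt_lim_plus | apply derivable_pt_lim_div
      | apply derivable_pt_lim_mult ]
  | cbv beta ].

Lemma continuity_of_derivable_pt_lim f :
  (forall t, exists l, derivable_pt_lim f t l) -> continuity f.
Proof.
  intros Hd t. destruct (Hd t) as [l Hl].
  apply derivable_continuous_pt. exact (exist _ l Hl).
Qed.

Lemma derivable_pt_lim_max_eq0 f c l :
  derivable_pt_lim f c l -> (forall x, f x <= f c) -> l = 0.
Proof.
  intros Hd Hmax.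
  apply (deriv_maximum f (c - 1) (c + 1) c (exist _ l Hd)); try lra.
  intros x _ _. apply Hmax.
Qed.

Lemma deriv_nonneg_le f f' :
  (forall t, derivable_pt_lim f t (f' t)) -> (forall t, 0 <= f' t) ->
  forall a b, a <= b -> f a <= f b.
Proof.
  intros Hd Hpos a b Hab. destruct (Req_dec a b) as [-> | Hne]; [lra |].
  destruct (MVT_cor2 f f' a b) as [c [Hc _]]; [lra | intros; apply Hd |].
  specialize (Hpos c). nra.
Qed.

Lemma deriv_nonpos_ge f f' :
  (forall t, derivable_pt_lim f t (f' t)) -> (forall t, f' t <= 0) ->
  forall a b, a <= b -> f b <= f a.
Proof.
  intros Hd Hneg a b Hab.
  enough (- f a <= - f b) by lra.
  apply (deriv_nonneg_le (fun t => - f t) (fun t => - f' t)); auto.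
  - intro t. exact (derivable_pt_lim_opp f t _ (Hd t)).
  - intro t. specialize (Hneg t). lra.
Qed.

Lemma continuity_nonzero_sign g :
  continuity g -> (forall t, g t <> 0) -> (forall t, 0 < g t) \/ (forall t, g t < 0).
Proof.
  intros Hc Hg.
  assert (Hsame : forall t, 0 < g t * g 0).
  { intro t. apply Rnot_le_lt. intro Hle.
    destruct (Rle_dec t 0) as [Ht | Ht].
    - destruct (IVT_cor g t 0 Hc Ht Hle) as [z [_ Hz]]. exact (Hg z Hz).
    - destruct (IVT_cor g 0 t Hc) as [z [_ Hz]]; [lra | nra |]. exact (Hg z Hz). }
  pose proof (Hg 0).
  destruct (Rlt_or_le 0 (g 0)); [left | right]; intro t; specialize (Hsame t); nra.
Qed.

Lemma continuity_pt_pos_nbhd f x :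
  continuity_pt f x -> 0 < f x -> exists d, 0 < d /\ forall y, Rabs (y - x) < d -> 0 < f y.
Proof.
  intros Hc Hx. destruct (Hc (f x) Hx) as [d [Hd Hnear]].
  exists d. split; [exact Hd |]. intros y Hy.
  destruct (Req_dec x y) as [<- | Hne]; [exact Hx |].
  specialize (Hnear y (conj (conj I Hne) Hy)). simpl in Hnear. unfold Rdist in Hnear.
  apply Rabs_def2 in Hnear. lra.
Qed.

Lemma last_nonpos_point f r s :
  continuity f -> r < s -> f r <= 0 -> 0 < f s ->
  exists z, z < s /\ f z <= 0 /\ forall t, z < t <= s -> 0 < f t.
Proof.
  intros Hc Hrs Hr Hs.
  set (E := fun t => r <= t <= s /\ f t <= 0).
  destruct (completeness E) as [z [Hub Hlub]].
  - exists s. intros t [Ht _]. lra.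
  - exists r. split; [lra | exact Hr].
  - assert (Hrz : r <= z) by (apply Hub; split; [lra | exact Hr]).
    assert (Hzs : z <= s) by (apply Hlub; intros t [Ht _]; lra).
    assert (Hfz : f z <= 0).
    { apply Rnot_lt_le. intro Hpos.
      destruct (continuity_pt_pos_nbhd f z (Hc z) Hpos) as [d [Hd Hnear]].
      enough (z <= z - d / 2) by lra.
      apply Hlub. intros t Et. pose proof (Hub t Et) as Htz.
      apply Rnot_lt_le. intro Ht. destruct Et as [_ Hft].
      assert (0 < f t) by (apply Hnear; apply Rabs_def1; lra). lra. }
    exists z. split; [| split; [exact Hfz |]].
    + destruct (Req_dec z s) as [-> | Hne]; lra.
    + intros t Ht. apply Rnot_le_lt. intro Hft.
      assert (t <= z) by (apply Hub; split; [lra | exact Hft]). lra.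
Qed.

Lemma gronwall_zero E E' L t0 :
  (forall t, derivable_pt_lim E t (E' t)) -> (forall t, 0 <= E t) ->
  (forall t, E' t <= L * E t) -> E t0 = 0 -> forall t, t0 <= t -> E t = 0.
Proof.
  intros Hd Hnn Hbound H0 t Ht.
  set (H := fun t => E t * exp (- L * t)).
  assert (Hdecr : H t <= H t0).
  { apply (deriv_nonpos_ge H (fun t => (E' t - L * E t) * exp (- L * t))); [| | exact Ht].
    - intro s. eapply derivable_pt_lim_eq.
      + apply (derivable_pt_lim_mult E (fun t => exp (- L * t))); [apply Hd |].
        apply (derivable_pt_lim_comp (fun t => - L * t) exp s (- L * 1) (exp (- L * s))).
        * eapply derivable_pt_lim_eq;
            [apply (derivable_pt_lim_scal (fun t => t)), derivable_pt_lim_id | ring].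
        * apply derivable_pt_lim_exp.
      + ring.
    - intro s. pose proof (exp_pos (- L * s)). specialize (Hbound s). nra. }
  unfold H in Hdecr. rewrite H0 in Hdecr.
  pose proof (exp_pos (- L * t)). specialize (Hnn t). nra.
Qed.

Definition periodic (f : R -> R) (T : R) : Prop := forall t, f (t + T) = f t.

Lemma periodic_shift_nat f T (n : nat) : periodic f T -> forall t, f (t + INR n * T) = f t.
Proof.
  intros Hf. induction n as [| n IH]; intro t.
  - simpl. f_equal. ring.
  - rewrite <- (IH t), <- (Hf (t + INR n * T)), S_INR. f_equal. ring.
Qed.

Lemma periodic_shift_Z f T (n : Z) : periodic f T -> forall t, f (t + IZR n * T) = f t.
Proof.
  intros Hf t. destruct (Z_le_gt_dec 0 n) as [Hn | Hn].
  - rewrite <- (Z2Nat.id n Hn), <- INR_IZR_INZ. now apply periodic_shift_nat.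
  - rewrite <- (periodic_shift_nat f T (Z.to_nat (- n)) Hf (t + IZR n * T)).
    rewrite INR_IZR_INZ, Z2Nat.id, opp_IZR by lia. f_equal. ring.
Qed.

Lemma shift_into_period T : 0 < T -> forall a t, exists n : Z, a <= t + IZR n * T <= a + T.
Proof.
  intros HT a t. set (x := (t - a) / T).
  destruct (archimed x) as [Hup Hup1].
  exists (1 - up x)%Z. rewrite minus_IZR.
  assert (Ht : t = a + x * T) by (unfold x; field; lra).
  rewrite Ht. split; nra.
Qed.

Lemma periodic_continuous_bounded f T :
  0 < T -> periodic f T -> continuity f -> exists M, forall t, f t <= M.
Proof.
  intros HT Hf Hc.
  destruct (continuity_ab_maj f 0 T) as [m [Hm _]]; [lra | intros; apply Hc |].
  exists (f m). intro t. destruct (shift_into_period T HT 0 t) as [n Hn].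
  rewrite <- (periodic_shift_Z f T n Hf t). apply Hm. lra.
Qed.

Lemma periodic_monotone_constant f f' T :
  0 < T -> periodic f T -> (forall t, derivable_pt_lim f t (f' t)) ->
  (forall t, 0 <= f' t) \/ (forall t, f' t <= 0) -> forall t s, f t = f s.
Proof.
  intros HT Hf Hd Hsign t s.
  destruct (shift_into_period T HT s t) as [n [Hlo Hhi]].
  rewrite <- (periodic_shift_Z f T n Hf t).
  destruct Hsign as [Hpos | Hneg].
  - pose proof (deriv_nonneg_le f f' Hd Hpos _ _ Hlo).
    pose proof (deriv_nonneg_le f f' Hd Hpos _ _ Hhi).
    rewrite Hf in *. lra.
  - pose proof (deriv_nonpos_ge f f' Hd Hneg _ _ Hlo).
    pose proof (deriv_nonpos_ge f f' Hd Hneg _ _ Hhi).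
    rewrite Hf in *. lra.
Qed.

Lemma periodic_growth_vanishes x g T :
  0 < T -> periodic x T -> (forall t, 0 <= x t) ->
  (forall t, derivable_pt_lim x t (x t * g t)) -> continuity g -> (forall t, g t <> 0) ->
  forall t, x t = 0.
Proof.
  intros HT Hx Hnn Hd Hc Hg t.
  assert (Hconst : forall s, x s = x t).
  { intro s. apply (periodic_monotone_constant x (fun t => x t * g t) T HT Hx Hd).
    destruct (continuity_nonzero_sign g Hc Hg) as [Hpos | Hneg]; [left | right];
      intro r; specialize (Hnn r); [specialize (Hpos r) | specialize (Hneg r)]; nra. }
  assert (Hrate : x t * g t = 0).
  { apply (derivable_pt_lim_max_eq0 x t _ (Hd t)). intro s. rewrite Hconst. lra. }
  apply Rmult_integral in Hrate. destruct Hrate as [? | Hg0]; [assumption |].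
  exfalso. exact (Hg t Hg0).
Qed.

Lemma periodic_nonpos_of_decreasing_where_pos f f' T t0 :
  0 < T -> periodic f T -> (forall t, derivable_pt_lim f t (f' t)) -> f t0 = 0 ->
  (forall t, 0 < f t -> f' t <= 0) -> forall t, f t <= 0.
Proof.
  intros HT Hf Hd H0 Hdecr s. apply Rnot_lt_le. intro Hs.
  destruct (shift_into_period T HT (s - T) t0) as [n Hn].
  set (r := t0 + IZR n * T) in Hn.
  assert (Hr : f r = 0) by (unfold r; rewrite periodic_shift_Z; assumption).
  assert (Hrs : r < s) by (destruct (Req_dec r s) as [<- | ]; lra).
  destruct (last_nonpos_point f r s (continuity_of_derivable_pt_lim f (fun t => ex_intro _ _ (Hd t))) Hrs)
    as [z [Hzs [Hfz Hpos]]]; [lra | exact Hs |].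
  destruct (MVT_cor2 f f' z s) as [c [Hmvt Hc]]; [exact Hzs | intros; apply Hd |].
  specialize (Hdecr c (Hpos c ltac:(lra))). nra.
Qed.

(* RHS minus LHS is (1-P)^2 p^2 + (1+P^2) q^2 + (1+Q^2) p^2 + (1-Q)^2 q^2
   + (c1 u + g v) (p+q)^2 + (G-g) v (p^2+q^2) + 2 b1 u p^2 + 2 b2 v q^2. *)
Lemma quadratic_growth_bound p q P Q u v b1 b2 c1 g G :
  0 <= u -> 0 <= v -> 0 <= b1 -> 0 <= b2 -> 0 <= c1 -> 0 <= g -> g <= G ->
  2 * p * (p * P + u * (- b1 * p - c1 * q)) + 2 * q * (q * Q + v * (- g * p - b2 * q))
  <= ((1 + P ^ 2) + (1 + Q ^ 2) + c1 * u + G * v) * (p ^ 2 + q ^ 2).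
Proof.
  intros Hu Hv Hb1 Hb2 Hc1 Hg HgG.
  assert (0 <= c1 * u * (p + q) ^ 2) by (apply Rmult_le_pos; [nra | apply pow2_ge_0]).
  assert (0 <= g * v * (p + q) ^ 2) by (apply Rmult_le_pos; [nra | apply pow2_ge_0]).
  assert (0 <= (G - g) * v * (p ^ 2 + q ^ 2))
    by (apply Rmult_le_pos; [nra | pose proof (pow2_ge_0 p); pose proof (pow2_ge_0 q); lra]).
  assert (0 <= b1 * u * p ^ 2) by (apply Rmult_le_pos; [nra | apply pow2_ge_0]).
  assert (0 <= b2 * v * q ^ 2) by (apply Rmult_le_pos; [nra | apply pow2_ge_0]).
  assert (0 <= (1 - P) ^ 2 * p ^ 2) by (apply Rmult_le_pos; apply pow2_ge_0).
  assert (0 <= (1 - Q) ^ 2 * q ^ 2) by (apply Rmult_le_pos; apply pow2_ge_0).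
  assert (0 <= (1 + P ^ 2) * q ^ 2) by (apply Rmult_le_pos; [pose proof (pow2_ge_0 P); lra | apply pow2_ge_0]).
  assert (0 <= (1 + Q ^ 2) * p ^ 2) by (apply Rmult_le_pos; [pose proof (pow2_ge_0 Q); lra | apply pow2_ge_0]).
  nra.
Qed.

Section PeriodicSolution.

Variables a1 a2 b1 b2 c1 c2 k T : R.
Hypotheses (ha2 : 0 <= a2) (hb1 : 0 <= b1) (hb2 : 0 <= b2) (hc1 : 0 < c1) (hc2 : 0 < c2)
  (hk : 0 <= k) (hT : 0 < T).
Variables u v : R -> R.
Hypothesis hsol : is_solution a1 a2 b1 b2 c1 c2 k u v.
Hypotheses (hu_per : periodic u T) (hv_per : periodic v T).
Hypothesis hquadrant : forall t, 0 <= u t /\ 0 <= v t.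

Definition rate_u t := a1 - b1 * u t - c1 * v t.
Definition rate_v t := a2 / (1 + k * u t) - b2 * v t - c2 * u t.
(* minus the partial derivative of the rate of v with respect to u *)
Definition rate_v_slope t := a2 * k / (1 + k * u t) ^ 2 + c2.
Definition u_dot t := u t * rate_u t.
Definition v_dot t := v t * rate_v t.
Definition u_ddot t := u_dot t * rate_u t + u t * (- b1 * u_dot t - c1 * v_dot t).
Definition v_ddot t := v_dot t * rate_v t + v t * (- rate_v_slope t * u_dot t - b2 * v_dot t).
Definition rate_product t := rate_u t * rate_v t.
Definition dissipation t := c1 * v t * rate_v t ^ 2 + rate_v_slope t * u t * rate_u t ^ 2.
Definition speed2 t := u_dot t ^ 2 + v_dot t ^ 2.
Definition speed2_rate t := 2 * u_dot t * u_ddot t + 2 * v_dot t * v_ddot t.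
Definition speed2_rate_bound t :=
  (1 + rate_u t ^ 2) + (1 + rate_v t ^ 2) + c1 * u t + (a2 * k + c2) * v t.

Lemma rate_product_periodic : periodic rate_product T.
Proof. intro t. unfold rate_product, rate_u, rate_v. now rewrite hu_per, hv_per. Qed.

Lemma speed2_periodic : periodic speed2 T.
Proof. intro t. unfold speed2, u_dot, v_dot, rate_u, rate_v. now rewrite hu_per, hv_per. Qed.

Lemma speed2_rate_bound_periodic : periodic speed2_rate_bound T.
Proof. intro t. unfold speed2_rate_bound, rate_u, rate_v. now rewrite hu_per, hv_per. Qed.

Lemma denominator_pos t : 0 < 1 + k * u t.
Proof. destruct (hquadrant t). nra. Qed.

Lemma rate_v_slope_pos t : 0 < rate_v_slope t.
Proof.
  unfold rate_v_slope. pose proof (denominator_pos t).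
  assert (0 <= a2 * k / (1 + k * u t) ^ 2)
    by (apply Rmult_le_pos; [nra | left; apply Rinv_0_lt_compat, pow_lt; lra]).
  lra.
Qed.

Lemma rate_v_slope_le t : rate_v_slope t <= a2 * k + c2.
Proof.
  unfold rate_v_slope. destruct (hquadrant t).
  assert (1 <= (1 + k * u t) ^ 2) by nra.
  assert (/ (1 + k * u t) ^ 2 <= 1) by (rewrite <- Rinv_1; apply Rinv_le_contravar; lra).
  unfold Rdiv. assert (0 <= a2 * k) by nra. nra.
Qed.

Lemma u_deriv t : derivable_pt_lim u t (u_dot t).
Proof.
  eapply derivable_pt_lim_eq; [apply (hsol t) |].
  unfold field_u, u_dot, rate_u. ring.
Qed.

Lemma v_deriv t : derivable_pt_lim v t (v_dot t).
Proof.
  eapply derivable_pt_lim_eq; [apply (hsol t) |].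
  unfold field_v, v_dot, rate_v. pose proof (denominator_pos t). field. lra.
Qed.

Lemma rate_u_deriv t : derivable_pt_lim rate_u t (- b1 * u_dot t - c1 * v_dot t).
Proof.
  pose proof u_deriv. pose proof v_deriv.
  unfold rate_u at 1. derive. ring.
Qed.

Lemma rate_v_deriv t :
  derivable_pt_lim rate_v t (- rate_v_slope t * u_dot t - b2 * v_dot t).
Proof.
  pose proof u_deriv. pose proof v_deriv. pose proof (denominator_pos t).
  unfold rate_v at 1. derive.
  - lra.
  - unfold rate_v_slope, Rsqr. field. lra.
Qed.

Lemma rate_product_deriv t :
  derivable_pt_lim rate_product t
    (- (b1 * u t + b2 * v t) * rate_product t - dissipation t).
Proof.
  pose proof rate_u_deriv. pose proof rate_v_deriv.
  unfold rate_product at 1. derive.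
  unfold rate_product, dissipation, u_dot, v_dot. ring.
Qed.

Lemma dissipation_nonneg_terms t :
  0 <= c1 * v t * rate_v t ^ 2 /\ 0 <= rate_v_slope t * u t * rate_u t ^ 2.
Proof.
  destruct (hquadrant t). pose proof (rate_v_slope_pos t).
  split; apply Rmult_le_pos; try apply pow2_ge_0; nra.
Qed.

Lemma dissipation_eq0 t : dissipation t = 0 -> u_dot t = 0 /\ v_dot t = 0.
Proof.
  unfold dissipation, u_dot, v_dot. intros H0.
  destruct (dissipation_nonneg_terms t) as [Hv Hu].
  destruct (hquadrant t). pose proof (rate_v_slope_pos t).
  assert (Hv0 : v t * rate_v t ^ 2 = 0).
  { assert (Hc : c1 * (v t * rate_v t ^ 2) = 0) by lra.
    apply Rmult_integral in Hc. destruct Hc; [lra | assumption]. }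
  assert (Hu0 : u t * rate_u t ^ 2 = 0).
  { assert (Hg : rate_v_slope t * (u t * rate_u t ^ 2) = 0) by lra.
    apply Rmult_integral in Hg. destruct Hg; [lra | assumption]. }
  split; apply Rsqr_0_uniq; unfold Rsqr; nra.
Qed.

Lemma rate_product_zero_equilibrium t0 :
  rate_product t0 = 0 -> u_dot t0 = 0 /\ v_dot t0 = 0.
Proof.
  intros H0. apply dissipation_eq0.
  assert (Hle : forall t, rate_product t <= 0).
  { apply (periodic_nonpos_of_decreasing_where_pos rate_product _ T t0 hT
      rate_product_periodic rate_product_deriv H0).
    intros t Ht. destruct (hquadrant t).
    assert (0 <= (b1 * u t + b2 * v t) * rate_product t) by (apply Rmult_le_pos; nra).
    assert (0 <= dissipation t) by (unfold dissipation; pose proof (dissipation_nonneg_terms t); lra).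
    lra. }
  pose proof (derivable_pt_lim_max_eq0 _ _ _ (rate_product_deriv t0)) as Hmax.
  rewrite H0 in Hmax. specialize (Hmax Hle). lra.
Qed.

Lemma speed2_deriv t : derivable_pt_lim speed2 t (speed2_rate t).
Proof.
  assert (Hu : forall t, derivable_pt_lim u_dot t (u_ddot t)).
  { intro s. pose proof u_deriv. pose proof rate_u_deriv.
    unfold u_dot at 1. derive. unfold u_ddot, u_dot. ring. }
  assert (Hv : forall t, derivable_pt_lim v_dot t (v_ddot t)).
  { intro s. pose proof v_deriv. pose proof rate_v_deriv.
    unfold v_dot at 1. derive. unfold v_ddot, v_dot. ring. }
  unfold speed2 at 1. derive. unfold speed2_rate. ring.
Qed.

Lemma speed2_nonneg t : 0 <= speed2 t.
Proof.
  unfold speed2. pose proof (pow2_ge_0 (u_dot t)). pose proof (pow2_ge_0 (v_dot t)). lra.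
Qed.

Lemma speed2_rate_le t : speed2_rate t <= speed2_rate_bound t * speed2 t.
Proof.
  destruct (hquadrant t). pose proof (rate_v_slope_pos t).
  apply quadratic_growth_bound; try lra. apply rate_v_slope_le.
Qed.

Lemma speed2_rate_bounded : exists L, forall t, speed2_rate t <= L * speed2 t.
Proof.
  destruct (periodic_continuous_bounded speed2_rate_bound T hT speed2_rate_bound_periodic)
    as [L HL].
  - pose proof u_deriv. pose proof v_deriv. pose proof rate_u_deriv. pose proof rate_v_deriv.
    apply continuity_of_derivable_pt_lim. intro t. eexists.
    unfold speed2_rate_bound at 1. derive. reflexivity.
  - exists L. intro t. pose proof (speed2_rate_le t). specialize (HL t).
    pose proof (speed2_nonneg t). nra.
Qed.

Lemma equilibrium_constant t0 :
  u_dot t0 = 0 -> v_dot t0 = 0 -> forall t s, u t = u s /\ v t = v s.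
Proof.
  intros Hu0 Hv0.
  assert (Hspeed : forall t, speed2 t = 0).
  { destruct speed2_rate_bounded as [L HL].
    intro t. destruct (shift_into_period T hT t0 t) as [n Hn].
    rewrite <- (periodic_shift_Z speed2 T n speed2_periodic).
    apply (gronwall_zero speed2 _ L t0 speed2_deriv speed2_nonneg HL); [| lra].
    unfold speed2. rewrite Hu0, Hv0. ring. }
  assert (Hdot : forall t, u_dot t = 0 /\ v_dot t = 0).
  { intro t. specialize (Hspeed t). unfold speed2 in Hspeed.
    pose proof (pow2_ge_0 (u_dot t)). pose proof (pow2_ge_0 (v_dot t)). split; nra. }
  intros t s. split.
  - apply (periodic_monotone_constant u u_dot T hT hu_per u_deriv).
    left. intro r. rewrite (proj1 (Hdot r)). lra.
  - apply (periodic_monotone_constant v v_dot T hT hv_per v_deriv).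
    left. intro r. rewrite (proj2 (Hdot r)). lra.
Qed.

Lemma periodic_solution_constant : forall t s, u t = u s /\ v t = v s.
Proof.
  destruct (classic (exists t0, rate_product t0 = 0)) as [[t0 H0] | Hnz].
  - destruct (rate_product_zero_equilibrium t0 H0). now apply (equilibrium_constant t0).
  - assert (Hu : forall t, rate_u t <> 0).
    { intros t Ht. apply Hnz. exists t. unfold rate_product. rewrite Ht. ring. }
    assert (Hv : forall t, rate_v t <> 0).
    { intros t Ht. apply Hnz. exists t. unfold rate_product. rewrite Ht. ring. }
    pose proof (periodic_growth_vanishes u rate_u T hT hu_per (fun t => proj1 (hquadrant t))
      u_deriv (continuity_of_derivable_pt_lim _ (fun t => ex_intro _ _ (rate_u_deriv t))) Hu) as Hu0.
    pose proof (periodic_growth_vanishes v rate_v T hT hv_per (fun t => proj2 (hquadrant t))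
      v_deriv (continuity_of_derivable_pt_lim _ (fun t => ex_intro _ _ (rate_v_deriv t))) Hv) as Hv0.
    intros t s. now rewrite !Hu0, !Hv0.
Qed.

End PeriodicSolution.

Theorem mainTheorem6 (a1 a2 b1 b2 c1 c2 : R)
  (ha1 : 0 < a1) (ha2 : 0 < a2) (hb1 : 0 < b1) (hb2 : 0 < b2)
  (hc1 : 0 < c1) (hc2 : 0 < c2) (k : R) (hk : 0 <= k) :
  forall u v : R -> R, ~ periodic_orbit_in_quadrant a1 a2 b1 b2 c1 c2 k u v.
Proof.
  intros u v [Hsol [[T [HT Hper]] [[t1 [t2 Hne]] Hquadrant]]].
  apply Hne.
  destruct (periodic_solution_constant a1 a2 b1 b2 c1 c2 k T
              ltac:(lra) ltac:(lra) ltac:(lra) hc1 hc2 hk HT u v Hsol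
              (fun t => proj1 (Hper t)) (fun t => proj2 (Hper t)) Hquadrant t1 t2)
    as [-> ->].
  reflexivity.
Qed.
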